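(* Let $K$ be an idempotent ordered TGP-$\omega$-valuation monoid, $AP$ a finite set of atomic propositions, $k\in K\setminus\{\mathbf{0},\mathbf{1}\}$ and $\varphi\in k\text{-}t\text{-}RULTL(K,AP)$. Then $\|\varphi\|:(\mathcal{P}(AP))^{\omega}\to K$ is $k$-safe.
   Context: Idempotent ordered TGP-$\omega$-valuation monoid $(K,+,\cdot,Val^{\omega},\mathbf{0},\mathbf{1})$: complete monoid $(K,+,\mathbf{0})$ (infinitary sums over arbitrary index sets with the usual axioms), idempotent, totally ordered by the natural order $k\le k'$ iff $k'=k'+k$; $Val^{\omega}$ maps finitely-valued sequences in $K$ to $K$; $\cdot$ has zero $\mathbf{0}$ and unit $\mathbf{1}$; $Val^{\omega}=\mathbf{0}$ if some entry is $\mathbf{0}$; $Val^{\omega}(\mathbf{1}^{\omega})=\mathbf{1}$; $\sum_I(k\cdot\mathbf{1})=k\cdot\sum_I\mathbf{1}$; $Val^{\omega}((\sum_{i_j\in I_j}k_{i_j})_j)=\sum_{(i_j)_j\in\prod_j I_j}Val^{\omega}((k_{i_j})_j)$ for finite $I_j$, $k_{i_j}$ in a finite $L\subseteq K$ with each family entirely in $L\setminus\{\mathbf{0},\mathbf{1}\}$ or entirely in $\{\mathbf{0},\mathbf{1}\}$; moreover $Val^{\omega}(\mathbf{1},k_1,\dots)=Val^{\omega}(k_1,\dots)$, $Val^{\omega}(k,\mathbf{1},\mathbf{1},\dots)=k$, $k\le\mathbf{1}$, and $k_i\ge k\ \forall i\Rightarrow Val^{\omega}((k_i)_i)\ge k$.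 Weighted LTL over $AP$ and $K$: $\varphi::=k\mid a\mid\neg a\mid\varphi\vee\varphi\mid\varphi\wedge\varphi\mid\bigcirc\varphi\mid\varphi U\varphi\mid\square\varphi$, with semantics: $(\|k\|,w)=k$; $(\|a\|,w)=\mathbf{1}$ if $a\in w(0)$ else $\mathbf{0}$; $\neg a$ dually; $\vee\mapsto+$, $\wedge\mapsto\cdot$ pointwise; $(\|\bigcirc\varphi\|,w)=(\|\varphi\|,w_{\ge1})$; $(\|\varphi U\psi\|,w)=\sum_{i\ge0}Val^{\omega}((\|\varphi\|,w_{\ge0}),\dots,(\|\varphi\|,w_{\ge i-1}),(\|\psi\|,w_{\ge i}),\mathbf{1},\mathbf{1},\dots)$; $(\|\square\varphi\|,w)=Val^{\omega}(((\|\varphi\|,w_{\ge i}))_{i\ge0})$. $true:=\mathbf{1}$, $\varphi\tilde U\psi:=\square\varphi\vee(\varphi U\psi)$. $sbLTL(K,AP)$: $\varphi::=true\mid a\mid\neg a\mid\varphi\vee\varphi\mid\varphi\wedge\varphi\mid\bigcirc\varphi\mid\varphi\tilde U\varphi\mid\square\varphi$. $L_k=\{k'\in K\mid k'\ge k\}$. $k\text{-}stLTL(K,AP)$: formulas $\bigvee_{1\le i\le n}(k_i\wedge\varphi_i)$, $k_i\in L_k\setminus\{\mathbf{0},\mathbf{1}\}$, $\varphi_i\in sbLTL(K,AP)$. $k\text{-}t\text{-}RULTL(K,AP)$ is the least class of formulas such that: (1) every $k'\in L_k$ is in it; (2) $sbLTL(K,AP)\subseteq$ it; (3) $k\text{-}stLTL(K,AP)\subseteq$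 it; (4) closed under $\bigcirc$; (5) closed under $\vee$; (6) if $\varphi\in sbLTL(K,AP)$ and $\psi\in k\text{-}stLTL(K,AP)$, or $\psi=\xi\tilde U\lambda$, or $\psi=\square\xi$ with $\xi,\lambda\in k\text{-}stLTL(K,AP)$, then $\varphi\wedge\psi,\psi\wedge\varphi$ are in it; (7) if $\varphi,\psi\in k\text{-}stLTL(K,AP)$ then $\varphi\tilde U\psi$ is in it; (8) if $\varphi\in k\text{-}stLTL(K,AP)$ then $\square\varphi$ is in it. A series $s$ is $k$-safe if for every $w$: whenever for every $i>0$ there is $u$ with $(s,w_{<i}u)\ge k$ ($w_{<i}$ the length-$i$ prefix), then $(s,w)\ge k$. *)

From HB Require Import structures.
From mathcomp Require Import all_boot.
From Stdlib Require List.

Set Implicit Arguments.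
Unset Strict Implicit.
Unset Printing Implicit Defensive.

Definition fin_valued (K : Type) (s : nat -> K) : Prop :=
  exists l : list K, forall n, List.In (s n) l.

Definition finite_type (I : Type) : Prop :=
  exists l : list I, forall i, List.In i l.

(* Idempotent ordered TGP-omega-valuation monoid.
   Val is given as a total function on sequences, but all of its axioms
   are only required on finitely-valued sequences (the paper's domain). *)
Record IOTGP := {
  carrier :> Type;
  kadd : carrier -> carrier -> carrier;
  kmul : carrier -> carrier -> carrier;
  ksum : forall I : Type, (I -> carrier) -> carrier;
  kval : (nat -> carrier) -> carrier;
  kzero : carrier;
  kone : carrier;
  add_assoc : forall a b c, kadd a (kadd b c) = kadd (kadd a b) c;
  add_comm : forall a b, kadd a b = kadd b a;
  add_0 : forall a, kadd kzero a = a;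
  sum_empty : forall (I : Type) (g : I -> carrier), (I -> False) -> ksum g = kzero;
  sum_single : forall (I : Type) (g : I -> carrier) (i0 : I),
      (forall i, i = i0) -> ksum g = g i0;
  sum_pair : forall a b, ksum (fun x : bool => if x then a else b) = kadd a b;
  sum_partition : forall (I J : Type) (f : I -> J) (g : I -> carrier),
      ksum g = ksum (fun j : J => ksum (fun x : {i : I | f i = j} => g (proj1_sig x)));
  add_idem : forall a, kadd a a = a;
  (* totally ordered by the natural order  a <= b  iff  b = b + a *)
  le_total : forall a b, b = kadd b a \/ a = kadd a b;
  mul0k : forall a, kmul kzero a = kzero;
  mulk0 : forall a, kmul a kzero = kzero;
  mul1k : forall a, kmul kone a = a;
  mulk1 : forall a, kmul a kone = a;
  val_zero : forall s, fin_valued s -> (exists n, s n = kzero) -> kval s = kzero;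
  val_one : kval (fun _ => kone) = kone;
  sum_mul_one : forall (I : Type) (a : carrier),
      ksum (fun _ : I => kmul a kone) = kmul a (ksum (fun _ : I => kone));
  val_distr : forall (Idx : nat -> Type) (k : forall j, Idx j -> carrier)
      (L : list carrier),
      (forall j, finite_type (Idx j)) ->
      (forall j i, List.In (k j i) L) ->
      (forall j, (forall i, k j i <> kzero /\ k j i <> kone) \/
                 (forall i, k j i = kzero \/ k j i = kone)) ->
      kval (fun j => ksum (k j)) =
      ksum (fun p : (forall j, Idx j) => kval (fun j => k j (p j)));
  val_shift_one : forall s, fin_valued s ->
      kval (fun n => match n with 0 => kone | S m => s m end) = kval s;
  val_head : forall a, kval (fun n => match n with 0 => a | S _ => kone end) = a;
  le_one : forall a, kone = kadd kone a;
  val_lower : forall (s : nat -> carrier) a, fin_valued s ->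
      (forall i, s i = kadd (s i) a) -> kval s = kadd (kval s) a
}.

Definition kle (K : IOTGP) (a b : K) : Prop := b = kadd b a.

Inductive formula (K AP : Type) : Type :=
| FConst of K
| FAtom of AP
| FNegAtom of AP
| FOr of formula K AP & formula K AP
| FAnd of formula K AP & formula K AP
| FNext of formula K AP
| FUntil of formula K AP & formula K AP
| FBox of formula K AP.

Arguments FConst {K AP}.
Arguments FAtom {K AP}.
Arguments FNegAtom {K AP}.
Arguments FOr {K AP}.
Arguments FAnd {K AP}.
Arguments FNext {K AP}.
Arguments FUntil {K AP}.
Arguments FBox {K AP}.

Definition FTrue {K : IOTGP} {AP : Type} : formula K AP := FConst (kone K).
Definition FWUntil {K AP : Type} (f g : formula K AP) : formula K AP :=
  FOr (FBox f) (FUntil f g).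

Definition word (AP : finType) := nat -> {set AP}.
Definition suffix (AP : finType) (w : word AP) (i : nat) : word AP :=
  fun n => w (i + n).

Fixpoint sem (K : IOTGP) (AP : finType) (f : formula K AP) (w : word AP) : K :=
  match f with
  | FConst k => k
  | FAtom a => if a \in w 0 then kone K else kzero K
  | FNegAtom a => if a \in w 0 then kzero K else kone K
  | FOr f1 f2 => kadd (sem f1 w) (sem f2 w)
  | FAnd f1 f2 => kmul (sem f1 w) (sem f2 w)
  | FNext f1 => sem f1 (suffix w 1)
  | FUntil f1 f2 =>
      ksum (fun i : nat =>
        kval (fun n => if n < i then sem f1 (suffix w n)
                      else if n == i then sem f2 (suffix w i)
                      else kone K))
  | FBox f1 => kval (fun n => sem f1 (suffix w n))
  end.

Inductive sbLTL (K : IOTGP) (AP : Type) : formula K AP -> Prop :=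
| sb_true : sbLTL FTrue
| sb_atom a : sbLTL (FAtom a)
| sb_natom a : sbLTL (FNegAtom a)
| sb_or f g : sbLTL f -> sbLTL g -> sbLTL (FOr f g)
| sb_and f g : sbLTL f -> sbLTL g -> sbLTL (FAnd f g)
| sb_next f : sbLTL f -> sbLTL (FNext f)
| sb_wuntil f g : sbLTL f -> sbLTL g -> sbLTL (FWUntil f g)
| sb_box f : sbLTL f -> sbLTL (FBox f).

Definition Lk_proper (K : IOTGP) (k k' : K) : Prop :=
  kle k k' /\ k' <> kzero K /\ k' <> kone K.

Inductive stLTL (K : IOTGP) (AP : Type) (k : K) : formula K AP -> Prop :=
| st_base k' f : Lk_proper k k' -> sbLTL f -> stLTL k (FAnd (FConst k') f)
| st_or f g : stLTL k f -> stLTL k g -> stLTL k (FOr f g).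

Inductive tRULTL (K : IOTGP) (AP : Type) (k : K) : formula K AP -> Prop :=
| r_const k' : kle k k' -> tRULTL k (FConst k')
| r_sb f : sbLTL f -> tRULTL k f
| r_st f : stLTL k f -> tRULTL k f
| r_next f : tRULTL k f -> tRULTL k (FNext f)
| r_or f g : tRULTL k f -> tRULTL k g -> tRULTL k (FOr f g)
| r_and_l f g : sbLTL f ->
    (stLTL k g \/
     (exists x l, stLTL k x /\ stLTL k l /\ g = FWUntil x l) \/
     (exists x, stLTL k x /\ g = FBox x)) ->
    tRULTL k (FAnd f g)
| r_and_r f g : sbLTL f ->
    (stLTL k g \/
     (exists x l, stLTL k x /\ stLTL k l /\ g = FWUntil x l) \/
     (exists x, stLTL k x /\ g = FBox x)) ->
    tRULTL k (FAnd g f)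
| r_wuntil f g : stLTL k f -> stLTL k g -> tRULTL k (FWUntil f g)
| r_box f : stLTL k f -> tRULTL k (FBox f).

Definition concat_prefix (AP : finType) (w : word AP) (i : nat) (u : word AP)
  : word AP := fun n => if n < i then w n else u (n - i).

Definition k_safe (K : IOTGP) (AP : finType) (k : K) (s : word AP -> K) : Prop :=
  forall w : word AP,
    (forall i, 0 < i -> exists u : word AP, kle k (s (concat_prefix w i u))) ->
    kle k (s w).

From Pilot Require Import Defs.
From HB Require Import structures.
From mathcomp Require Import all_boot.
From Stdlib Require Import Classical FunctionalExtensionality.

Set Implicit Arguments.
Unset Strict Implicit.
Unset Printing Implicit Defensive.

(* The k-cut {w | k <= ||phi||(w)} of a k-t-RULTL formula is closed in the
   prefix topology of (P(AP))^omega, and closedness of the cut is exactly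
   k-safety. Atomic propositions have clopen cuts, and closed sets are stable
   under finite unions, arbitrary intersections and shifts. The syntactic
   restrictions make every subformula under [] or U~ finitely valued with
   each value either 0 or >= k (0 or 1 for sbLTL). For such values the
   infinitary sum is >= k iff some summand is, and Val is >= k iff every
   entry is; so the cut of [] phi is an intersection of shifted closed sets,
   and the cut of phi U~ psi is the weak until of two closed sets, which is
   again closed. *)

(* [seq.suffix] would otherwise shadow the suffix of a word. *)
Local Notation suffix := Defs.suffix.

Section PrefixClosed.
Variable AP : finType.
Implicit Types (w v : word AP) (P Q : word AP -> Prop).

Definition eq_prefix (n : nat) w v := forall m, m < n -> w m = v m.

Definition prefix_closed P :=
  forall w, (forall n, exists v, eq_prefix n w v /\ P v) -> P w.

Lemma eq_prefix_le n n' w v : n' <= n -> eq_prefix n w v -> eq_prefix n' w v.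
Proof. by move=> le_n'n eq_wv m lt_mn'; apply: eq_wv; apply: leq_trans le_n'n. Qed.

Lemma eq_prefix_suffix j n w v :
  eq_prefix (j + n) w v -> eq_prefix n (suffix w j) (suffix v j).
Proof. by move=> eq_wv m lt_mn; apply: eq_wv; rewrite ltn_add2l. Qed.

Lemma prefix_closed_ext P Q :
  prefix_closed P -> (forall w, P w <-> Q w) -> prefix_closed Q.
Proof.
move=> clP PQ w approx; apply/PQ; apply: clP => n.
by have [v [eq_wv /PQ Pv]] := approx n; exists v.
Qed.

Lemma prefix_closed_const (b : Prop) : prefix_closed (fun _ => b).
Proof. by move=> w approx; have [v [_ hb]] := approx 0. Qed.

Lemma prefix_closed_and P Q :
  prefix_closed P -> prefix_closed Q -> prefix_closed (fun w => P w /\ Q w).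
Proof.
move=> clP clQ w approx.
by split; [apply: clP | apply: clQ] => n; have [v [eq_wv [Pv Qv]]] := approx n;
  exists v.
Qed.

Lemma prefix_closed_or P Q :
  prefix_closed P -> prefix_closed Q -> prefix_closed (fun w => P w \/ Q w).
Proof.
move=> clP clQ w approx.
case: (classic (forall n, exists v, eq_prefix n w v /\ P v)) => [?|/not_all_ex_not [n1 notP]].
  by left; apply: clP.
case: (classic (forall n, exists v, eq_prefix n w v /\ Q v)) => [?|/not_all_ex_not [n2 notQ]].
  by right; apply: clQ.
have [v [eq_wv [Pv|Qv]]] := approx (maxn n1 n2).
- by case: notP; exists v; split=> //; apply: eq_prefix_le eq_wv; apply: leq_maxl.
- by case: notQ; exists v; split=> //; apply: eq_prefix_le eq_wv; apply: leq_maxr.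
Qed.

Lemma prefix_closed_imp (b : Prop) P :
  prefix_closed P -> prefix_closed (fun w => b -> P w).
Proof.
move=> clP; case: (classic b) => [hb|nb].
  by apply: (prefix_closed_ext clP) => w; split=> // /(_ hb).
by apply: (prefix_closed_ext (prefix_closed_const (b := True))).
Qed.

Lemma prefix_closed_forall (I : Type) (P : I -> word AP -> Prop) :
  (forall i, prefix_closed (P i)) -> prefix_closed (fun w => forall i, P i w).
Proof.
by move=> clP w approx i; apply: clP => n; have [v [eq_wv Pv]] := approx n; exists v.
Qed.

Lemma prefix_closed_exists_le (m : nat) (P : nat -> word AP -> Prop) :
  (forall i, prefix_closed (P i)) ->
  prefix_closed (fun w => exists2 i, i <= m & P i w).
Proof.
move=> clP; elim: m => [|m IHm].
  apply: (prefix_closed_ext (clP 0)) => w.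
  by split=> [|[i]]; [exists 0 | rewrite leqn0 => /eqP ->].
apply: (prefix_closed_ext (prefix_closed_or IHm (clP m.+1))) => w; split.
- case=> [[i le_im Piw]|Pw]; last by exists m.+1.
  by exists i => //; apply: leqW.
- case=> i; rewrite leq_eqVlt ltnS => /orP [/eqP -> | le_im] Piw; first by right.
  by left; exists i.
Qed.

Lemma prefix_closed_suffix P j :
  prefix_closed P -> prefix_closed (fun w => P (suffix w j)).
Proof.
move=> clP w approx; apply: clP => n; have [v [eq_wv Pv]] := approx (j + n).
by exists (suffix v j); split=> //; apply: eq_prefix_suffix.
Qed.

Lemma prefix_closed_atom (a : AP) : prefix_closed (fun w => a \in w 0).
Proof. by move=> w approx; have [v [eq_wv Pv]] := approx 1; rewrite eq_wv. Qed.

Lemma prefix_closed_natom (a : AP) : prefix_closed (fun w => a \notin w 0).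
Proof. by move=> w approx; have [v [eq_wv Pv]] := approx 1; rewrite eq_wv. Qed.

(* Weak until holds iff for every horizon m, either P holds up to m or the
   until is already fulfilled by time m: an intersection of finite unions. *)
Lemma prefix_closed_weak_until P Q :
  prefix_closed P -> prefix_closed Q ->
  prefix_closed (fun w => (forall n, P (suffix w n)) \/
    exists i, (forall n, n < i -> P (suffix w n)) /\ Q (suffix w i)).
Proof.
move=> clP clQ.
have clP_upto (R : nat -> bool) :
    prefix_closed (fun w => forall n, R n -> P (suffix w n)).
  apply: prefix_closed_forall => n.
  by apply: prefix_closed_imp; apply: prefix_closed_suffix.
have cl_horizons : prefix_closed (fun w => forall m,
    (forall n, n <= m -> P (suffix w n)) \/
    exists2 i, i <= m & (forall n, n < i -> P (suffix w n)) /\ Q (suffix w i)).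
  apply: prefix_closed_forall => m; apply: prefix_closed_or; first exact: clP_upto.
  apply: prefix_closed_exists_le => i.
  by apply: prefix_closed_and; [exact: clP_upto | exact: prefix_closed_suffix].
apply: (prefix_closed_ext cl_horizons) => w; split=> [horizons|].
- case: (classic (forall n, P (suffix w n))) => [?|/not_all_ex_not [m notPm]].
    by left.
  case: (horizons m) => [Pupto|[i _ until]]; last by right; exists i.
  by case: notPm; apply: Pupto.
- case=> [allP m|[i [Pbefore Qi]] m]; first by left.
  case: (leqP i m) => [le_im|lt_mi]; first by right; exists i.
  by left => n le_nm; apply: Pbefore; apply: leq_ltn_trans lt_mi.
Qed.

End PrefixClosed.

Section Valuation.
Variable K : IOTGP.
Implicit Types (a b : K) (g s : nat -> K).

Definition boolean a := a = kzero K \/ a = kone K.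

Definition until_seq s s' (i : nat) : nat -> K :=
  fun n => if n < i then s n else if n == i then s' i else kone K.

Lemma kle_one a : kle a (kone K).
Proof. exact: le_one. Qed.

Lemma kle_addl c a b : kle c a -> kle c (kadd a b).
Proof. by rewrite /kle => ca; rewrite -add_assoc (add_comm b) add_assoc -ca. Qed.

Lemma kle_addr c a b : kle c b -> kle c (kadd a b).
Proof. by rewrite add_comm; apply: kle_addl. Qed.

Lemma kle_add_iff c a b : kle c (kadd a b) <-> kle c a \/ kle c b.
Proof.
split=> [|[/kle_addl | /kle_addr] //].
by case: (le_total a b) => [|<-]; [rewrite add_comm => <-; right | left].
Qed.

Lemma ksum_split_at g j :
  ksum g = kadd (g j) (ksum (fun x : {i : nat | (i == j) = false} => g (sval x))).
Proof.
rewrite (sum_partition (fun i => i == j) g) -sum_pair; congr ksum.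
apply: functional_extensionality => -[] //.
apply: (sum_single _ (i0 := exist _ j (eqxx j))) => -[i eq_ij].
have def_i := eqP eq_ij; subst i.
by rewrite (eq_irrelevance eq_ij (eqxx j)).
Qed.

Lemma kle_ksum c g j : kle c (g j) -> kle c (ksum g).
Proof. by rewrite (ksum_split_at g j); apply: kle_addl. Qed.

Lemma ksum0 : ksum (fun _ : nat => kzero K) = kzero K.
Proof.
have := sum_partition (I := unit) (fun _ => 0) (fun _ => kzero K).
rewrite (sum_single _ (i0 := tt)); last by case.
move=> split0; rewrite [RHS]split0; congr ksum.
apply: functional_extensionality => -[|n].
- symmetry; apply: (sum_single _ (i0 := exist _ tt erefl)) => -[[] e].
  by rewrite (eq_irrelevance e erefl).
- by symmetry; apply: sum_empty => -[].
Qed.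

Lemma ksum_bool g : (forall i, boolean (g i)) -> boolean (ksum g).
Proof.
move=> gb; case: (classic (exists i, g i = kone K)) => [[j gj]|no_one].
  by right; rewrite (ksum_split_at g j) gj -le_one.
left; rewrite -ksum0; congr ksum; apply: functional_extensionality => i.
by case: (gb i) => // gi; case: no_one; exists i.
Qed.

Lemma kval_bool s : (forall n, boolean (s n)) -> boolean (kval s).
Proof.
move=> sb; have fv : fin_valued s.
  by exists [:: kzero K; kone K] => n; case: (sb n) => ->; [left | right; left].
case: (classic (exists n, s n = kzero K)) => [s0|no_zero].
  by left; apply: val_zero.
right; rewrite -val_one; congr kval; apply: functional_extensionality => n.
by case: (sb n) => // sn; case: no_zero; exists n.
Qed.

Lemma until_seq_bool s s' i :
  (forall n, boolean (s n)) -> (forall n, boolean (s' n)) ->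
  forall n, boolean (until_seq s s' i n).
Proof. by move=> sb s'b n; rewrite /until_seq; do 2?case: ifP => _ //; right. Qed.

Lemma until_seq_fin_valued s s' i :
  fin_valued s -> fin_valued s' -> fin_valued (until_seq s s' i).
Proof.
move=> [L sL] [L' s'L]; exists (L ++ L' ++ [:: kone K]) => n.
rewrite /until_seq; apply: List.in_or_app; case: ifP => _; first by left.
by right; apply: List.in_or_app; case: ifP => _; [left | right; left].
Qed.

Section Cut.
Variable k : K.
Hypothesis k_neq0 : k <> kzero K.

Definition zero_or_ge a := a = kzero K \/ kle k a.

Lemma not_kle0 : ~ kle k (kzero K).
Proof. by rewrite /kle add_0 => /esym. Qed.

Lemma boolean_zero_or_ge a : boolean a -> zero_or_ge a.
Proof. by case=> ->; [left | right; apply: kle_one]. Qed.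

Lemma kle_ksum_iff g :
  (forall i, zero_or_ge (g i)) -> kle k (ksum g) <-> exists i, kle k (g i).
Proof.
move=> gz; split=> [ge_k|[i]]; last exact: kle_ksum.
apply: NNPP => none; apply: not_kle0.
have g0 : g = fun _ => kzero K.
  apply: functional_extensionality => i.
  by case: (gz i) => // gi; case: none; exists i.
by rewrite g0 ksum0 in ge_k.
Qed.

Lemma kval_ge_iff s : fin_valued s -> (forall n, zero_or_ge (s n)) ->
  kle k (kval s) <-> forall n, kle k (s n).
Proof.
move=> fv sz; split=> [ge_k n|all_ge]; last exact: val_lower.
case: (sz n) => // sn; case: not_kle0.
by rewrite -(val_zero fv (ex_intro _ n sn)).
Qed.

Lemma kval_zero_or_ge s : fin_valued s -> (forall n, zero_or_ge (s n)) ->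
  zero_or_ge (kval s).
Proof.
move=> fv sz; case: (classic (exists n, s n = kzero K)) => [s0|no_zero].
  by left; apply: val_zero.
right; apply/kval_ge_iff => // n.
by case: (sz n) => // sn; case: no_zero; exists n.
Qed.

Lemma kle_mul_bool_l a b : boolean a -> kle k (kmul a b) <-> kle k a /\ kle k b.
Proof.
case=> ->; first by rewrite mul0k; split=> [/not_kle0|[/not_kle0]].
by rewrite mul1k; split=> [?|[]//]; split=> //; apply: kle_one.
Qed.

Lemma kle_mul_bool_r a b : boolean b -> kle k (kmul a b) <-> kle k a /\ kle k b.
Proof.
case=> ->; first by rewrite mulk0; split=> [/not_kle0|[_ /not_kle0]].
by rewrite mulk1; split=> [?|[]//]; split=> //; apply: kle_one.
Qed.

Lemma until_seq_zero_or_ge s s' i :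
  (forall n, zero_or_ge (s n)) -> (forall n, zero_or_ge (s' n)) ->
  forall n, zero_or_ge (until_seq s s' i n).
Proof.
by move=> sz s'z n; rewrite /until_seq; do 2?case: ifP => _ //; right; apply: kle_one.
Qed.

Lemma kle_kval_until_iff s s' i :
  fin_valued s -> fin_valued s' ->
  (forall n, zero_or_ge (s n)) -> (forall n, zero_or_ge (s' n)) ->
  kle k (kval (until_seq s s' i)) <->
  (forall n, n < i -> kle k (s n)) /\ kle k (s' i).
Proof.
move=> fv fv' sz s'z.
rewrite kval_ge_iff; [|exact: until_seq_fin_valued|exact: until_seq_zero_or_ge].
rewrite /until_seq; split=> [all_ge|[before at_i] n].
  split=> [n lt_ni|]; first by move: (all_ge n); rewrite lt_ni.
  by move: (all_ge i); rewrite ltnn eqxx.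
case: ltnP => [/before //|_]; by case: eqP => _ //; apply: kle_one.
Qed.

End Cut.
End Valuation.

Section Semantics.
Variables (K : IOTGP) (AP : finType) (k : K).
Hypothesis k_neq0 : k <> kzero K.
Implicit Types (f g : formula K AP) (w : word AP).

Definition cut f w := kle k (sem f w).

Definition fin_range f := exists L : list K, forall w, List.In (sem f w) L.

Definition graded f := fin_range f /\ forall w, zero_or_ge k (sem f w).

Lemma bool_graded f : (forall w, boolean (sem f w)) -> graded f.
Proof.
move=> fb; split=> [|w]; last exact/boolean_zero_or_ge.
by exists [:: kzero K; kone K] => w; case: (fb w) => ->; [left | right; left].
Qed.

Lemma graded_or f g : graded f -> graded g -> graded (FOr f g).
Proof.
move=> [[Lf fL] fz] [[Lg gL] gz]; split=> [|w /=].
  exists (List.flat_map (fun a => List.map (kadd a) Lg) Lf) => w.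
  by apply/List.in_flat_map; exists (sem f w); split=> //; apply: List.in_map.
case: (fz w) => [->|ge_k]; first by rewrite add_0.
by right; apply: kle_addl.
Qed.

Lemma fin_valued_sem_suffix f w : fin_range f -> fin_valued (fun n => sem f (suffix w n)).
Proof. by move=> [L fL]; exists L. Qed.

Lemma cut_or_iff f g w : cut (FOr f g) w <-> cut f w \/ cut g w.
Proof. exact: kle_add_iff. Qed.

Lemma cut_box_iff f w : graded f -> cut (FBox f) w <-> forall n, cut f (suffix w n).
Proof.
by move=> [fr fz]; apply: kval_ge_iff => //; apply: fin_valued_sem_suffix.
Qed.

Lemma sem_until f g w : sem (FUntil f g) w =
  ksum (fun i => kval (until_seq (fun n => sem f (suffix w n))
                                 (fun n => sem g (suffix w n)) i)).
Proof. by []. Qed.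

Lemma cut_until_iff f g w : graded f -> graded g ->
  cut (FUntil f g) w <->
  exists i, (forall n, n < i -> cut f (suffix w n)) /\ cut g (suffix w i).
Proof.
move=> [fr fz] [gr gz].
have fv := fin_valued_sem_suffix w fr; have gv := fin_valued_sem_suffix w gr.
have sz n := fz (suffix w n); have s'z n := gz (suffix w n).
rewrite /cut sem_until (kle_ksum_iff k_neq0); last first.
  move=> i; apply: (kval_zero_or_ge k_neq0 (until_seq_fin_valued i fv gv)).
  exact: until_seq_zero_or_ge.
by split=> -[i /(kle_kval_until_iff k_neq0 i fv gv sz s'z) until]; exists i.
Qed.

Lemma prefix_closed_cut_box f :
  graded f -> prefix_closed (cut f) -> prefix_closed (cut (FBox f)).
Proof.
move=> fg clf.
have cl_all : prefix_closed (fun w => forall n, cut f (suffix w n)).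
  by apply: prefix_closed_forall => n; apply: prefix_closed_suffix.
by apply: (prefix_closed_ext cl_all) => w; rewrite cut_box_iff.
Qed.

Lemma prefix_closed_cut_wuntil f g : graded f -> graded g ->
  prefix_closed (cut f) -> prefix_closed (cut g) ->
  prefix_closed (cut (FWUntil f g)).
Proof.
move=> fg gg clf clg; apply: (prefix_closed_ext (prefix_closed_weak_until clf clg)).
by move=> w; rewrite cut_or_iff cut_box_iff // cut_until_iff.
Qed.

Lemma sbLTL_bool f w : sbLTL f -> boolean (sem f w).
Proof.
move=> fsb; elim: fsb w => [w|a w|a w|f1 g1 _ fb _ gb w|f1 g1 _ fb _ gb w|f1 _ fb w
    |f1 g1 _ fb _ gb w|f1 _ fb w] /=.
- by right.
- by case: ifP => _; [right | left].
- by case: ifP => _; [left | right].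
- by case: (fb w) => ->; [rewrite add_0 | right; rewrite -le_one].
- by case: (fb w) => ->; [left; rewrite mul0k | rewrite mul1k].
- exact: fb.
- have box_b : boolean (sem (FBox f1) w) by apply: kval_bool.
  have until_b : boolean (sem (FUntil f1 g1) w).
    rewrite sem_until; apply: ksum_bool => i; apply: kval_bool.
    by apply: until_seq_bool => n; [apply: fb | apply: gb].
  by case: box_b => /= ->; [rewrite add_0 | right; rewrite -le_one].
- exact: kval_bool.
Qed.

Lemma sbLTL_graded f : sbLTL f -> graded f.
Proof. by move=> fsb; apply: bool_graded => w; apply: sbLTL_bool. Qed.

Lemma prefix_closed_cut_or f g :
  prefix_closed (cut f) -> prefix_closed (cut g) -> prefix_closed (cut (FOr f g)).
Proof.
move=> clf clg; apply: (prefix_closed_ext (prefix_closed_or clf clg)) => w.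
by rewrite cut_or_iff.
Qed.

Lemma prefix_closed_cut_next f : prefix_closed (cut f) -> prefix_closed (cut (FNext f)).
Proof. by move=> clf; apply: (prefix_closed_ext (prefix_closed_suffix (j := 1) clf)). Qed.

Lemma prefix_closed_cut_and_bool_l f g : (forall w, boolean (sem f w)) ->
  prefix_closed (cut f) -> prefix_closed (cut g) -> prefix_closed (cut (FAnd f g)).
Proof.
move=> fb clf clg; apply: (prefix_closed_ext (prefix_closed_and clf clg)) => w.
by rewrite /cut /= kle_mul_bool_l.
Qed.

Lemma prefix_closed_cut_and_bool_r f g : (forall w, boolean (sem g w)) ->
  prefix_closed (cut f) -> prefix_closed (cut g) -> prefix_closed (cut (FAnd f g)).
Proof.
move=> gb clf clg; apply: (prefix_closed_ext (prefix_closed_and clf clg)) => w.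
by rewrite /cut /= kle_mul_bool_r.
Qed.

Lemma sbLTL_cut_closed f : sbLTL f -> prefix_closed (cut f).
Proof.
elim=> [|a|a|f1 g1 _ clf _ clg|f1 g1 f1sb clf _ clg|f1 _ clf
    |f1 g1 f1sb clf g1sb clg|f1 f1sb clf].
- apply: (prefix_closed_ext (prefix_closed_const (b := True))) => w.
  by split=> // _; apply: kle_one.
- apply: (prefix_closed_ext (prefix_closed_atom (a := a))) => w; rewrite /cut /=.
  case: (a \in w 0); first by split=> // _; apply: kle_one.
  by split=> // /not_kle0.
- apply: (prefix_closed_ext (prefix_closed_natom (a := a))) => w; rewrite /cut /=.
  case: (a \in w 0); first by split=> // /not_kle0.
  by split=> // _; apply: kle_one.
- exact: prefix_closed_cut_or.
- by apply: prefix_closed_cut_and_bool_l => // w; apply: sbLTL_bool.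
- exact: prefix_closed_cut_next.
- by apply: prefix_closed_cut_wuntil => //; apply: sbLTL_graded.
- by apply: prefix_closed_cut_box => //; apply: sbLTL_graded.
Qed.

Lemma stLTL_graded f : stLTL k f -> graded f.
Proof.
elim=> [k' f1 [k_le_k' _] f1sb|f1 g1 _ f1g _ g1g]; last exact: graded_or.
have f1b w := sbLTL_bool w f1sb.
split=> [|w]; last by case: (f1b w) => /= ->; [left; rewrite mulk0 | right; rewrite mulk1].
exists [:: kzero K; k'] => w /=.
by case: (f1b w) => ->; [left; rewrite mulk0 | right; left; rewrite mulk1].
Qed.

Lemma stLTL_cut_closed f : stLTL k f -> prefix_closed (cut f).
Proof.
elim=> [k' f1 [k_le_k' _] f1sb|f1 g1 _ clf _ clg]; last exact: prefix_closed_cut_or.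
apply: (prefix_closed_ext (sbLTL_cut_closed f1sb)) => w; rewrite /cut /=.
case: (sbLTL_bool w f1sb) => ->; first by rewrite mulk0.
by rewrite mulk1; split=> // _; apply: kle_one.
Qed.

Lemma stLTL_wuntil_cut_closed f g :
  stLTL k f -> stLTL k g -> prefix_closed (cut (FWUntil f g)).
Proof.
move=> fst gst.
by apply: prefix_closed_cut_wuntil; apply: stLTL_graded || apply: stLTL_cut_closed.
Qed.

Lemma stLTL_box_cut_closed f : stLTL k f -> prefix_closed (cut (FBox f)).
Proof.
move=> fst.
by apply: prefix_closed_cut_box; [apply: stLTL_graded | apply: stLTL_cut_closed].
Qed.

Lemma prefix_closed_cut_and_operand g :
  stLTL k g \/
  (exists x l, stLTL k x /\ stLTL k l /\ g = FWUntil x l) \/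
  (exists x, stLTL k x /\ g = FBox x) ->
  prefix_closed (cut g).
Proof.
case=> [|[[x [l [xst [lst ->]]]]|[x [xst ->]]]]; first exact: stLTL_cut_closed.
  exact: stLTL_wuntil_cut_closed.
exact: stLTL_box_cut_closed.
Qed.

Lemma tRULTL_cut_closed f : tRULTL k f -> prefix_closed (cut f).
Proof.
elim=> [k' k_le_k'|f1|f1|f1 _ clf|f1 g1 _ clf _ clg|f1 g1 f1sb g1op|f1 g1 f1sb g1op
    |f1 g1 f1st g1st|f1 f1st].
- by apply: (prefix_closed_ext (prefix_closed_const (b := True))).
- exact: sbLTL_cut_closed.
- exact: stLTL_cut_closed.
- exact: prefix_closed_cut_next.
- exact: prefix_closed_cut_or.
- apply: prefix_closed_cut_and_bool_l (sbLTL_cut_closed f1sb) _.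
    by move=> w; apply: sbLTL_bool.
  exact: prefix_closed_cut_and_operand.
- apply: prefix_closed_cut_and_bool_r _ (sbLTL_cut_closed f1sb).
    by move=> w; apply: sbLTL_bool.
  exact: prefix_closed_cut_and_operand.
- exact: stLTL_wuntil_cut_closed.
- exact: stLTL_box_cut_closed.
Qed.

End Semantics.

Lemma k_safe_of_prefix_closed (K : IOTGP) (AP : finType) (k : K) (s : word AP -> K) :
  prefix_closed (fun w => kle k (s w)) -> k_safe k s.
Proof.
move=> cl w extendable; apply: cl => n.
have [u ge_k] := extendable n.+1 (ltn0Sn n).
exists (concat_prefix w n.+1 u); split=> // m lt_mn.
by rewrite /concat_prefix ltnS (ltnW lt_mn).
Qed.

Theorem theorem6 (K : IOTGP) (AP : finType) (k : K)
  (hk0 : k <> kzero K) (hk1 : k <> kone K)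
  (phi : formula K AP) (hphi : tRULTL k phi) :
  k_safe k (sem phi).
Proof.
exact/k_safe_of_prefix_closed/(tRULTL_cut_closed hk0 hphi).
Qed.
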